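(* Let $G$ be a Tanner graph with largest right (check-node) degree $d_r^+$. If $p$ is any lift-realizable pseudocodeword of $G$ and $b$ is its maximum component, then the smallest degree of a lift of $G$ in which $p$ is realized is at most $\frac{b\,d_r^+}{2}$.
   Context: A Tanner graph $G$ is a finite bipartite graph with variable nodes $v_1,\dots,v_n$ and check nodes; it defines the binary code of all $x\in\{0,1\}^n$ such that every check node has an even number of neighbours $v_i$ with $x_i=1$. A degree-$\ell$ lift of $G$ replaces each node by a cloud of $\ell$ copies and each edge $(x,y)$ by a perfect matching between the clouds. A lift-realizable pseudocodeword $p\in\mathbb{Z}_{\ge0}^n$ is obtained (realized) from a codeword of the code of some finite lift by letting $p_i$ be the number of copies of $v_i$ assigned 1. *)

From mathcomp Require Import all_boot fingroup perm.
Set Implicit Arguments. Unset Strict Implicit. Unset Printing Implicit Defensive.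

(* A Tanner graph with variable nodes 'I_n and check nodes 'I_m, given by its
   (simple) bipartite adjacency relation E : variable -> check -> bool. *)
Record tanner_graph := TannerGraph {
  tg_n : nat;
  tg_m : nat;
  tg_adj : 'I_tg_n -> 'I_tg_m -> bool }.
Arguments tg_adj : clear implicits.

Definition check_deg (G : tanner_graph) (j : 'I_(tg_m G)) : nat :=
  #|[set i : 'I_(tg_n G) | tg_adj G i j]|.

Definition max_check_deg (G : tanner_graph) : nat :=
  \max_(j : 'I_(tg_m G)) check_deg j.

(* A degree-l lift is given by a permutation (perfect matching between the
   clouds) sigma i j for every edge (i,j): copy (i,a) is joined to (j, sigma i j a).
   (Values of sigma on non-edges are irrelevant.) *)
Definition lift_assignment (G : tanner_graph) (l : nat) :=
  'I_(tg_n G) -> 'I_(tg_m G) -> {perm 'I_l}.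

(* A set X of variable copies (those assigned 1) is a codeword of the lifted
   code: each check copy (j,c) has an even number of neighbours in X. *)
Definition lift_codeword (G : tanner_graph) (l : nat)
  (sigma : lift_assignment G l) (X : {set 'I_(tg_n G) * 'I_l}) : bool :=
  [forall j : 'I_(tg_m G), forall c : 'I_l,
     ~~ odd #|[set ia in X | tg_adj G ia.1 j && (sigma ia.1 j ia.2 == c)]|].

Definition pcw_of (G : tanner_graph) (l : nat) (X : {set 'I_(tg_n G) * 'I_l})
  (i : 'I_(tg_n G)) : nat :=
  #|[set a : 'I_l | (i, a) \in X]|.

Definition realized_in_degree (G : tanner_graph) (p : 'I_(tg_n G) -> nat) (l : nat) : Prop :=
  0 < l /\ exists (sigma : lift_assignment G l) (X : {set 'I_(tg_n G) * 'I_l}),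
    lift_codeword sigma X /\ forall i, pcw_of X i = p i.

Definition lift_realizable (G : tanner_graph) (p : 'I_(tg_n G) -> nat) : Prop :=
  exists l, realized_in_degree p l.

Definition max_comp (G : tanner_graph) (p : 'I_(tg_n G) -> nat) : nat :=
  \max_(i : 'I_(tg_n G)) p i.

From mathcomp Require Import all_boot fingroup perm.
Set Implicit Arguments. Unset Strict Implicit. Unset Printing Implicit Defensive.

(* A lift codeword meets every check copy (j, c) in an even number of copies,
   and in at most one copy of each neighbour v_i, to which it is joined by a
   single edge of the matching.  Summing over c shows that p is balanced: every check load
   S_j = \sum_(i ~ j) p_i is even and 2 p_i <= S_j.  Conversely a balanced p
   is realized in every degree l >= max_j S_j / 2 with p <= l: list the S_j
   copies assigned 1 around check j in variable order and join the s-th one to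
   check copy s mod S_j / 2.  Each check copy below S_j / 2 then receives
   exactly two of them, and as p_i <= S_j / 2 the copies of one variable reach
   distinct check copies.  Finally max_j S_j / 2 <= b d_r^+ / 2. *)

Lemma card_set_pairs (I J : finType) (P : pred (I * J)) :
  #|[set ij | P ij]| = \sum_i #|[set j | P (i, j)]|.
Proof.
rewrite -sum1dep_card (eq_bigl (fun ij => true && P (ij.1, ij.2))) => [|[] //].
rewrite -(pair_big_dep xpredT (fun i j => P (i, j)) (fun _ _ => 1)).
by apply: eq_bigr => i _; rewrite sum1dep_card.
Qed.

Lemma sum_card_fibers (T U : finType) (A : {set T}) (f : T -> U) :
  \sum_u #|[set x in A | f x == u]| = #|A|.
Proof.
rewrite -sum1_card (partition_big f xpredT) //=.
by apply: eq_bigr => u _; rewrite sum1dep_card.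
Qed.

Lemma big_ord_blocks (R : Type) (idx : R) (op : Monoid.law idx)
    (q : nat -> nat) (F : nat -> R) n :
  \big[op/idx]_(i < n) \big[op/idx]_(s < q i) F (\sum_(k < i) q k + s)
  = \big[op/idx]_(s < \sum_(i < n) q i) F s.
Proof.
elim: n => [|n IHn]; first by rewrite !big_ord0.
by rewrite !big_ord_recr /= IHn big_split_ord.
Qed.

Definition rot_prefix (h o a : nat) : nat := if a < h then (a + o) %% h else a.

Lemma rot_prefix_inj h o : injective (rot_prefix h o).
Proof.
have modh_lt a b : a < h -> (b + o) %% h < h.
  by move=> ah; rewrite ltn_pmod //; apply: leq_ltn_trans ah.
rewrite /rot_prefix => a b; case: ifP => ah; case: ifP => bh.
- by move/eqP; rewrite eqn_modDr !modn_small // => /eqP.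
- by move=> e; move: (modh_lt a a ah); rewrite e bh.
- by move=> e; move: (modh_lt b b bh); rewrite -e ah.
- by [].
Qed.

Lemma rot_prefix_ltn l h o a : h <= l -> a < l -> rot_prefix h o a < l.
Proof.
move=> hl al; rewrite /rot_prefix; case: ifP => // ah.
by apply: leq_trans hl; rewrite ltn_pmod //; apply: leq_ltn_trans ah.
Qed.

(* Capping h at l makes this a permutation of 'I_l for every h; it is only
   used with h <= l. *)
Definition rot_prefix_ord l h o (a : 'I_l) : 'I_l :=
  Ordinal (rot_prefix_ltn o (geq_minr h l) (ltn_ord a)).

Lemma rot_prefix_ord_inj l h o : injective (@rot_prefix_ord l h o).
Proof. by move=> a b /(congr1 val)/rot_prefix_inj/val_inj. Qed.

Definition rot_prefix_perm l h o : {perm 'I_l} := perm (@rot_prefix_ord_inj l h o).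

Lemma rot_prefix_permE l h o (a : 'I_l) :
  h <= l -> a < h -> rot_prefix_perm l h o a = (a + o) %% h :> nat.
Proof. by move=> hl ah; rewrite permE /= /rot_prefix (minn_idPl hl) ah. Qed.

Definition check_load (G : tanner_graph) (p : 'I_(tg_n G) -> nat)
    (j : 'I_(tg_m G)) : nat :=
  \sum_(i | tg_adj G i j) p i.

Definition check_balanced (G : tanner_graph) (p : 'I_(tg_n G) -> nat) : Prop :=
  forall j, ~~ odd (check_load p j) /\
            forall i, tg_adj G i j -> (p i).*2 <= check_load p j.

Section LiftCodeword.
Variables (G : tanner_graph) (l : nat) (sigma : lift_assignment G l).
Variable X : {set 'I_(tg_n G) * 'I_l}.

Lemma card_lift_copies (Q : pred 'I_(tg_n G)) :
  #|[set ia in X | Q ia.1]| = \sum_(i | Q i) pcw_of X i.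
Proof.
rewrite card_set_pairs [RHS]big_mkcond; apply: eq_bigr => i _ /=.
case: (Q i); first by apply: eq_card => a; rewrite !inE andbT.
by apply: eq_card0 => a; rewrite !inE andbF.
Qed.

Let hits Q j c :=
  [set ia in X | [&& tg_adj G ia.1 j, Q ia.1 & sigma ia.1 j ia.2 == c]].

Lemma sum_card_hits Q j :
  \sum_c #|hits Q j c| = \sum_(i | tg_adj G i j && Q i) pcw_of X i.
Proof.
rewrite -card_lift_copies -(sum_card_fibers _ (fun ia => sigma ia.1 j ia.2)).
by apply: eq_bigr => c _; apply: eq_card => ia; rewrite !inE !andbA.
Qed.

Lemma card_hits1 i j c : #|hits (pred1 i) j c| <= 1.
Proof.
rewrite -(cards1 (i, (sigma i j)^-1%g c)); apply: subset_leq_card.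
apply/subsetP => -[k a]; rewrite !inE /= => /and4P[_ _ /eqP-> /eqP<-].
by rewrite permK.
Qed.

Hypothesis X_codeword : lift_codeword sigma X.

Lemma card_hits_even j c : ~~ odd #|hits predT j c|.
Proof.
move/forallP/(_ j)/forallP/(_ c): X_codeword.
by congr (~~ odd _); apply: eq_card => ia; rewrite !inE.
Qed.

Lemma check_load_hits j : check_load (pcw_of X) j = \sum_c #|hits predT j c|.
Proof. by rewrite sum_card_hits; apply: eq_bigl => i; rewrite andbT. Qed.

Lemma lift_codeword_balanced : check_balanced (pcw_of X).
Proof.
move=> j; rewrite check_load_hits; split.
  by rewrite -dvdn2 dvdn_sum // => c _; rewrite dvdn2 card_hits_even.
move=> i ij.
have -> : pcw_of X i = \sum_(k | tg_adj G k j && pred1 i k) pcw_of X k.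
  by rewrite (big_pred1 i) // => k /=; case: eqP => [->|]; rewrite ?ij ?andbF.
rewrite -sum_card_hits -mul2n big_distrr leq_sum // => c _.
have double_le x y : x <= 1 -> x <= y -> ~~ odd y -> 2 * x <= y.
  by case: x => [|[|]] //; case: y => [|[|]].
apply: double_le; [exact: card_hits1 | | exact: card_hits_even].
by apply/subset_leq_card/subsetP => ia; rewrite !inE => /and4P[-> -> _ ->].
Qed.
End LiftCodeword.

Section CyclicLift.
Variables (G : tanner_graph) (p : 'I_(tg_n G) -> nat) (l : nat).
Hypothesis p_balanced : check_balanced p.
Hypothesis p_le : forall i, p i <= l.
Hypothesis check_load_le : forall j, check_load p j <= l.*2.

Let half j := (check_load p j)./2.

(* Indexed by nat, so that the offset of v_i is the prefix sum over k < i. *)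
Let weight j (k : nat) : nat :=
  if insub k is Some i then (if tg_adj G i j then p i else 0) else 0.

Let offset j (i : 'I_(tg_n G)) := \sum_(k < i) weight j k.

Let cyclic_lift : lift_assignment G l :=
  fun i j => rot_prefix_perm l (half j) (offset j i).

Let low_copies := [set ia : 'I_(tg_n G) * 'I_l | ia.2 < p ia.1].

Lemma sum_weight j : \sum_(i < tg_n G) weight j i = check_load p j.
Proof. by rewrite [RHS]big_mkcond; apply: eq_bigr => i _; rewrite /weight valK. Qed.

Lemma cyclic_liftE i j (a : 'I_l) :
  tg_adj G i j -> a < p i -> cyclic_lift i j a = (offset j i + a) %% half j :> nat.
Proof.
move=> ij ai; have [_ /(_ i ij)] := p_balanced j; rewrite -geq_half_double => p_half.
have half_le : half j <= l by rewrite -[l]doubleK half_leq.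
by rewrite rot_prefix_permE ?(leq_trans ai) // addnC.
Qed.

Lemma pcw_of_low_copies i : pcw_of low_copies i = p i.
Proof.
rewrite /pcw_of -sum1dep_card (eq_bigl (fun a : 'I_l => a < p i)) => [|a].
  by rewrite -(big_ord_widen _ (fun=> 1) (p_le i)) sum1_card card_ord.
by rewrite inE.
Qed.

Lemma low_copies_codeword : lift_codeword cyclic_lift low_copies.
Proof.
apply/forallP => j; apply/forallP => c.
have load_half : check_load p j = half j + half j.
  by rewrite addnn even_halfK //; case: (p_balanced j).
rewrite card_set_pairs /=.
rewrite (eq_bigr (fun i : 'I_(tg_n G) =>
    \sum_(s < weight j i) ((offset j i + s) %% half j == c : nat))); last first.
  move=> i _; rewrite /weight valK; case: ifP => ij; last first.
    by rewrite big_ord0; apply: eq_card0 => a; rewrite !inE andbF.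
  rewrite -(sum1dep_card (fun a : 'I_l =>
    ((i, a) \in low_copies) && (true && (cyclic_lift i j a == c)))).
  rewrite (big_ord_widen _ (fun s => (offset j i + s) %% half j == c : nat) (p_le i)).
  rewrite big_mkcond [RHS]big_mkcond.
  apply: eq_bigr => a _; rewrite !inE /=; case: ltnP => //= ai.
  by rewrite -val_eqE /= cyclic_liftE.
rewrite (big_ord_blocks _ (weight j) (fun s => s %% half j == c : nat)).
rewrite sum_weight load_half big_split_ord /=.
under [X in _ + X]eq_bigr do rewrite modnDl.
by rewrite addnn odd_double.
Qed.

Lemma check_balanced_realized : 0 < l -> realized_in_degree p l.
Proof.
move=> l_gt0; split=> //; exists cyclic_lift, low_copies.
by split; [exact: low_copies_codeword | exact: pcw_of_low_copies].
Qed.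
End CyclicLift.

Lemma realized_check_balanced (G : tanner_graph) (p : 'I_(tg_n G) -> nat) l :
  realized_in_degree p l -> check_balanced p.
Proof.
case=> _ [sigma [X [X_codeword pX]]] j.
have load_pX : check_load (pcw_of X) j = check_load p j by apply: eq_bigr.
have [load_even load_ge] := lift_codeword_balanced X_codeword j.
by rewrite -load_pX; split=> // i ij; rewrite -pX load_ge.
Qed.

Lemma check_load_le_max (G : tanner_graph) (p : 'I_(tg_n G) -> nat) j :
  check_load p j <= max_comp p * max_check_deg G.
Proof.
apply: (@leq_trans (\sum_(i in [set i | tg_adj G i j]) max_comp p)).
  rewrite /check_load (eq_bigl (fun i => i \in [set i | tg_adj G i j])) => [|i].
    by apply: leq_sum => i _; exact: leq_bigmax.
  by rewrite inE.
by rewrite sum_nat_const mulnC leq_mul2l leq_bigmax orbT.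
Qed.

Theorem corollary2 (G : tanner_graph) (p : 'I_(tg_n G) -> nat) :
  (forall i : 'I_(tg_n G), exists j : 'I_(tg_m G), tg_adj G i j) ->
  (exists i, p i != 0) ->
  lift_realizable p ->
  exists l, realized_in_degree p l /\ 2 * l <= max_comp p * max_check_deg G.
Proof.
move=> has_check [i0 p_i0] [l0 /realized_check_balanced p_balanced].
pose l := \max_j (check_load p j)./2.
have p_le i : p i <= l.
  have [j ij] := has_check i; apply: leq_trans (leq_bigmax j).
  by rewrite geq_half_double; case: (p_balanced j) => _; apply.
have load_le j : check_load p j <= l.*2.
  have [load_even _] := p_balanced j.
  by rewrite -(even_halfK load_even) leq_double; exact: leq_bigmax.
exists l; split.
  by apply: check_balanced_realized => //; apply: leq_trans (p_le i0); rewrite lt0n.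
rewrite mul2n -geq_half_double; apply/bigmax_leqP => j _.
exact/half_leq/check_load_le_max.
Qed.
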